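(* Let $n$ be even. Then there is no nondegenerate $n$-dimensional simplex $S$ with $\mathrm{ver}(S)\subset\mathrm{ver}(Q_n)$ and $S\subset Q_n\subset nS$.
   Context: $Q_n=[0,1]^n$; $\mathrm{ver}(\cdot)$ is the vertex set. $nS$ denotes the image of $S$ under the homothety with center at the center of gravity of $S$ and ratio $n$. *)

From HB Require Import structures.
From mathcomp Require Import all_boot all_order all_algebra.
From mathcomp Require Import reals.
Set Implicit Arguments. Unset Strict Implicit. Unset Printing Implicit Defensive.
Import Order.TTheory GRing.Theory Num.Theory.
Local Open Scope ring_scope.

(* Points of R^n are row vectors 'rV[R]_n; coordinate j of x is x ord0 j.
   A (candidate) n-simplex is given by its n+1 vertices v : 'I_n.+1 -> 'rV_n. *)

Definition in_cube (R : realType) (n : nat) (x : 'rV[R]_n) : Prop :=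
  forall j : 'I_n, 0 <= x ord0 j <= 1.

Definition cube_vertex (R : realType) (n : nat) (x : 'rV[R]_n) : Prop :=
  forall j : 'I_n, x ord0 j = 0 \/ x ord0 j = 1.

(* nondegenerate: the vertices are affinely independent *)
Definition aff_indep (R : realType) (n : nat) (v : 'I_n.+1 -> 'rV[R]_n) : Prop :=
  forall mu : 'I_n.+1 -> R,
    \sum_i mu i = 0 -> \sum_i mu i *: v i = 0 -> forall i, mu i = 0.

Definition in_simplex (R : realType) (n : nat) (v : 'I_n.+1 -> 'rV[R]_n)
  (x : 'rV[R]_n) : Prop :=
  exists l : 'I_n.+1 -> R,
    (forall i, 0 <= l i) /\ \sum_i l i = 1 /\ x = \sum_i l i *: v i.

Definition simplex_center (R : realType) (n : nat) (v : 'I_n.+1 -> 'rV[R]_n)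
  : 'rV[R]_n := (n.+1%:R)^-1 *: \sum_i v i.

Definition in_homothetic (R : realType) (n : nat) (sigma : R)
  (v : 'I_n.+1 -> 'rV[R]_n) (x : 'rV[R]_n) : Prop :=
  exists y, in_simplex v y /\
    x = simplex_center v + sigma *: (y - simplex_center v).

From HB Require Import structures.
From mathcomp Require Import all_boot all_order all_algebra.
From mathcomp Require Import reals.
From mathcomp Require Import ring.
Set Implicit Arguments. Unset Strict Implicit. Unset Printing Implicit Defensive.
Import Order.TTheory GRing.Theory Num.Theory.
Local Open Scope ring_scope.

(* Every point of sigma S has
   affine coordinates (w.r.t. the v_i) bounded below by (1 - sigma)/(n+1).
   For each vertex v_j the antipodal vertex 1 - v_j lies in Q_n, hence in nS,
   so  v_j + (1 - v_j) = 1  is an affine combination of the v_i with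
   coefficient sum 2 whose j-th coefficient is at least
   1 + (1 - n)/(n+1) = 2/(n+1).  By affine independence these combinations
   do not depend on j; so one combination has every coefficient at least
   2/(n+1) and total 2, whence all coefficients equal 2/(n+1), i.e.
   (2/(n+1)) (v_0 + ... + v_n) = (1, ..., 1).  Reading off one coordinate,
   2 * #{i | (v_i)_k = 1} = n + 1, which is impossible for n even. *)

Section AffineGeometry.
Context {R : realType} {n : nat}.
Implicit Types (v : 'I_n.+1 -> 'rV[R]_n) (x : 'rV[R]_n).

(* A point of sigma S is an affine combination of the vertices whose
   coefficients are at least (1 - sigma)/(n+1): the coefficients are
   sigma * l_i + (1 - sigma)/(n+1) for barycentric coordinates l of S. *)
Lemma in_homothetic_coords (sigma : R) v x : 0 <= sigma -> in_homothetic sigma v x ->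
  exists mu : 'I_n.+1 -> R,
    [/\ forall i, (1 - sigma) / n.+1%:R <= mu i,
        \sum_i mu i = 1 & x = \sum_i mu i *: v i].
Proof.
move=> sigma_ge0 [y [[l [l_ge0 [l_sum ->]]] ->]].
set a : R := (n.+1%:R)^-1.
have n1a : n.+1%:R * a = 1 by rewrite mulfV // pnatr_eq0.
exists (fun i => sigma * l i + (1 - sigma) * a); split.
- by move=> i; rewrite lerDr mulr_ge0.
- rewrite big_split /= -mulr_sumr l_sum sumr_const card_ord -[_ *+ n.+1]mulr_natr.
  by rewrite -mulrA [a * _]mulrC n1a; ring.
- rewrite /simplex_center -/a [RHS](eq_bigr (fun i =>
    sigma *: (l i *: v i) + (1 - sigma) *: (a *: v i))); last first.
    by move=> i _; rewrite scalerDl !scalerA.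
  rewrite big_split /= -!scaler_sumr scalerBr scalerBl scale1r.
  by rewrite addrCA.
Qed.

Lemma aff_indep_coords_unique v (a b : 'I_n.+1 -> R) : aff_indep v ->
  \sum_i a i = \sum_i b i -> \sum_i a i *: v i = \sum_i b i *: v i ->
  forall i, a i = b i.
Proof.
move=> indep sum_ab comb_ab i; apply/eqP; rewrite -subr_eq0; apply/eqP.
apply: (indep (fun i => a i - b i)); first by rewrite sumrB sum_ab subrr.
under eq_bigr do rewrite scalerBl.
by rewrite sumrB comb_ab subrr.
Qed.

Lemma cube_vertex_antipode x : cube_vertex x -> in_cube (const_mx 1 - x).
Proof.
by move=> vx j; rewrite !mxE; case: (vx j) => ->;
  rewrite ?subr0 ?subrr lexx ler01.
Qed.

End AffineGeometry.

Lemma sum_lower_bound_eq (R : numDomainType) (I : finType) (g : I -> R) c :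
  (forall i, c <= g i) -> \sum_i g i = #|I|%:R * c -> forall i, g i = c.
Proof.
move=> g_ge sum_g i; apply/eqP; rewrite -subr_eq0; apply/eqP.
apply: (@psumr_eq0P _ _ xpredT (fun i => g i - c)) => // [j _|].
  by rewrite subr_ge0.
by rewrite sumrB sum_g sumr_const mulr_natl subrr.
Qed.

Lemma cube_vertex_sum_coord (R : realType) (n : nat) (I : finType)
    (v : I -> 'rV[R]_n) (k : 'I_n) : (forall i, cube_vertex (v i)) ->
  (\sum_i v i) ord0 k = (\sum_i nat_of_bool (v i ord0 k == 1%R))%N%:R.
Proof.
move=> vv; rewrite summxE natr_sum; apply: eq_bigr => i _.
by case: (vv i k) => ->; rewrite ?eqxx // eq_sym oner_eq0.
Qed.

Section CubeInHomotheticSimplex.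
Variables (R : realType) (n : nat) (v : 'I_n.+1 -> 'rV[R]_n).
Hypothesis v_cube : forall i, cube_vertex (v i).
Hypothesis v_indep : aff_indep v.
Hypothesis cube_sub : forall x, in_cube x -> in_homothetic n%:R v x.

Let one : 'rV[R]_n := const_mx 1.

(* 1 = v_j + (1 - v_j) is an affine combination of weight 2 whose j-th
   coefficient is at least 2/(n+1): add the unit coefficient of v_j to
   the coordinates of 1 - v_j in nS. *)
Lemma antipode_combination j : exists g : 'I_n.+1 -> R,
  [/\ 2 / n.+1%:R <= g j, \sum_i g i = 2 & \sum_i g i *: v i = one].
Proof.
have [mu [mu_ge mu_sum mu_comb]] :=
  in_homothetic_coords (ler0n R n) (cube_sub (cube_vertex_antipode (v_cube j))).
exists (fun i => (i == j)%:R + mu i); split.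
- have -> : 2 / n.+1%:R = 1 + (1 - n%:R) / n.+1%:R :> R.
    rewrite -[X in X + _](@divff _ n.+1%:R) ?pnatr_eq0 // -mulrDl -natr1.
    by congr (_ / _); ring.
  by rewrite eqxx lerD2l.
- rewrite big_split /= mu_sum (bigD1 j) //= eqxx big1 ?addr0 //.
  by move=> i /negbTE ->.
- under eq_bigr do rewrite scalerDl.
  rewrite big_split /= -mu_comb (bigD1 j) //= eqxx scale1r big1 ?addr0.
    by rewrite addrC subrK.
  by move=> i /negbTE ->; rewrite scale0r.
Qed.

Lemma vertex_sum_scaled : (2 / n.+1%:R) *: \sum_i v i = one.
Proof.
have /fin_all_exists [g g_spec] := antipode_combination.
have g_indep j i : g j i = g ord0 i.
  have [_ sj cj] := g_spec j; have [_ s0 c0] := g_spec ord0.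
  by apply: aff_indep_coords_unique v_indep _ _ _; rewrite ?sj ?s0 ?cj ?c0.
have g0_const : forall i, g ord0 i = 2 / n.+1%:R.
  apply: sum_lower_bound_eq => [i|].
    by rewrite -(g_indep i); have [] := g_spec i.
  have [_ -> _] := g_spec ord0.
  by rewrite card_ord mulrCA mulfV ?pnatr_eq0 // mulr1.
have [_ _ <-] := g_spec ord0.
by rewrite scaler_sumr; apply: eq_bigr => i _; rewrite g0_const.
Qed.

End CubeInHomotheticSimplex.

Theorem mainTheorem3 (R : realType) (n : nat) :
  ~~ odd n -> (0 < n)%N ->
  ~ (exists v : 'I_n.+1 -> 'rV[R]_n,
       (forall i, cube_vertex (v i)) /\
       aff_indep v /\
       (forall x, in_simplex v x -> in_cube x) /\
       (forall x, in_cube x -> in_homothetic n%:R v x)).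
Proof.
move=> n_even n_gt0 [v [v_cube [v_indep [_ cube_sub]]]].
pose k := Ordinal n_gt0.
have := congr1 (fun x : 'rV[R]_n => x ord0 k)
  (vertex_sum_scaled v_cube v_indep cube_sub).
rewrite /= !mxE (cube_vertex_sum_coord _ v_cube).
set s := (\sum_i _)%N => coord_k.
have /eqP : (n.+1%:R : R) = (2 * s)%:R.
  by rewrite natrM -[LHS]mulr1 -{1}coord_k; field; rewrite addrC natr1 pnatr_eq0.
rewrite eqr_nat => /eqP /(congr1 odd).
by rewrite mul2n odd_double oddS (negbTE n_even).
Qed.
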